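(* Let $T_1,T_2$ be $2\times2$ matrices with entries in $\{0,1\}$, neither having a zero row, let $\alpha_i=T_1^{(i)}\otimes T_2^{(i)}$ ($i=1,2$), and suppose $|\alpha_1|=|\alpha_2|=\alpha$ with $\alpha\ge 2$ an integer. Suppose moreover that $k_{1,2}=k_{2,2}=:\beta$. Then $$h(T)=\left(\frac{1-\bar\lambda\,\frac{\ln\beta}{\ln\alpha}}{\lambda^2}\right)\ln\alpha .$$ Furthermore, if $k_{1,2}=k_{2,2}=\alpha$, then $h(T)=\frac{\ln\alpha}{\lambda}$.
   Context: $\lambda=\frac{1+\sqrt5}{2}$ and $\bar\lambda=\frac{1-\sqrt5}{2}$. $T_k^{(i)}$ is the $i$-th row of $T_k$, $(v_1,v_2)\otimes(w_1,w_2)=(v_1w_1,v_1w_2,v_2w_1,v_2w_2)$, and $|\alpha_i|$ is the number of ones in $\alpha_i$. Define $\gamma^{[s_j]}_{i,n}$ ($i,j\in\{1,2\}$, $n\ge0$) by $\gamma^{[s_j]}_{i,0}=1$ and for $n\ge1$ $$\gamma^{[s_1]}_{i,n}=\sum_{j,k=1}^2T_1(i,j)T_2(i,k)\,\gamma^{[s_1]}_{j,n-1}\gamma^{[s_2]}_{k,n-1},\qquad \gamma^{[s_2]}_{i,n}=\sum_{j=1}^2T_1(i,j)\,\gamma^{[s_1]}_{j,n-1}.$$ $k_{i,2}$ is the number of distinct terms in the expression for $\gamma^{[s_2]}_{i,n}$, i.e. the number of $j\in\{1,2\}$ with $T_1(i,j)=1$. Let $l_0=1$, $l_1=2$, $l_{k+1}=l_k+l_{k-1}$,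 $|E_n|=\sum_{k=0}^nl_k$ (number of elements of word length $\le n$ in $G=\langle s_1,s_2\mid s_2s_2=s_2\rangle$), and $h(T)=\limsup_{n\to\infty}\frac{\ln(\gamma^{[s_1]}_{1,n}+\gamma^{[s_1]}_{2,n})}{|E_n|}$ (the paper's entropy of the $G$-vertex shift defined by $T=(T_1,T_2)$). *)

From Stdlib Require Import Reals List Arith.
From Coquelicot Require Import Coquelicot.
Import ListNotations.
Open Scope R_scope.

Inductive I2 : Set := i1 | i2.

Definition mat2 := I2 -> I2 -> nat.

Definition is01 (T : mat2) : Prop := forall i j, T i j = 0%nat \/ T i j = 1%nat.
Definition no_zero_row (T : mat2) : Prop := forall i, exists j, T i j <> 0%nat.

Definition row (T : mat2) (i : I2) : list nat := [T i i1; T i i2].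

Definition kron2 (v w : list nat) : list nat :=
  flat_map (fun a => map (fun b => (a * b)%nat) w) v.

Definition nones (v : list nat) : nat := length (filter (Nat.eqb 1) v).

Definition alpha_vec (T1 T2 : mat2) (i : I2) : list nat := kron2 (row T1 i) (row T2 i).

Definition k2 (T1 : mat2) (i : I2) : nat := nones (row T1 i).

(* gamma n = (gamma^{[s1]}_{.,n}, gamma^{[s2]}_{.,n}) *)
Fixpoint gamma (T1 T2 : mat2) (n : nat) : (I2 -> nat) * (I2 -> nat) :=
  match n with
  | O => (fun _ => 1%nat, fun _ => 1%nat)
  | S m =>
      let (g1, g2) := gamma T1 T2 m in
      (fun i => (T1 i i1 * T2 i i1 * g1 i1 * g2 i1 + T1 i i1 * T2 i i2 * g1 i1 * g2 i2
               + T1 i i2 * T2 i i1 * g1 i2 * g2 i1 + T1 i i2 * T2 i i2 * g1 i2 * g2 i2)%nat,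
       fun i => (T1 i i1 * g1 i1 + T1 i i2 * g1 i2)%nat)
  end.

Definition gamma1 (T1 T2 : mat2) (i : I2) (n : nat) : nat := fst (gamma T1 T2 n) i.

Fixpoint lseq (k : nat) : nat :=
  match k with
  | O => 1%nat
  | S O => 2%nat
  | S ((S p) as q) => (lseq q + lseq p)%nat
  end.

Fixpoint En (n : nat) : nat :=
  match n with
  | O => lseq 0
  | S m => (En m + lseq (S m))%nat
  end.

Definition entropy (T1 T2 : mat2) : Rbar :=
  LimSup_seq (fun n => ln (INR (gamma1 T1 T2 i1 n + gamma1 T1 T2 i2 n)) / INR (En n)).

Definition lam : R := (1 + sqrt 5) / 2.
Definition lambar : R := (1 - sqrt 5) / 2.

(** Under the hypotheses every row of [T] contributes the same amount, so
    [gamma^{[s1]}_{i,n} = a_n] and [gamma^{[s2]}_{i,n} = b_n] do not depend on [i],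
    with [a_{n+1} = alpha a_n b_n] and [b_{n+1} = beta a_n].  Hence
    [ln a_n + ln alpha + ln beta] obeys the Fibonacci recurrence, and so does
    [|E_n| + 2 = l_{n+2}].  For two Fibonacci-type sequences [u] and [v], with [K]
    chosen so that [u - K v] has ratio [lambar] between its first two terms,
    [u - K v] is geometric of ratio [lambar], hence tends to [0], and
    [u_n / v_n -> K] as soon as [v_n -> +oo]. *)

From Stdlib Require Import Reals List Lia Lra Psatz.
From Coquelicot Require Import Coquelicot.
Open Scope R_scope.

Lemma lam_sq : lam ^ 2 = lam + 1.
Proof. unfold lam; pose proof (sqrt_sqrt 5); nra. Qed.

Lemma lam_add_lambar : lam + lambar = 1.
Proof. unfold lam, lambar; field. Qed.

Lemma lam_gt_1 : 1 < lam.
Proof.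
  unfold lam; pose proof (sqrt_sqrt 5); pose proof (sqrt_pos 5); nra.
Qed.

Lemma lambar_sq : lambar * lambar = lambar + 1.
Proof. unfold lambar; pose proof (sqrt_sqrt 5); nra. Qed.

Lemma Rabs_lambar_lt_1 : Rabs lambar < 1.
Proof.
  unfold lambar; pose proof (sqrt_sqrt 5); pose proof (sqrt_pos 5).
  apply Rabs_def1; nra.
Qed.

Definition fib_rec (u : nat -> R) : Prop := forall n, u (S (S n)) = u (S n) + u n.

Lemma fib_rec_geom (w : nat -> R) (q : R) :
  fib_rec w -> q * q = q + 1 -> w 1%nat = q * w 0%nat ->
  forall n, w n = w 0%nat * q ^ n.
Proof.
  intros Hw Hq H1.
  enough (H : forall n, w n = w 0%nat * q ^ n /\ w (S n) = w 0%nat * q ^ S n)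
    by (intro n; apply H).
  induction n as [|n [IH1 IH2]].
  - rewrite H1; split; simpl; ring.
  - split; [exact IH2|].
    rewrite Hw, IH1, IH2; simpl.
    replace (q * (q * q ^ n)) with (q * q * q ^ n) by ring.
    rewrite Hq; ring.
Qed.

Lemma fib_rec_ratio_lim (u v : nat -> R) (c d K : R) :
  fib_rec u -> fib_rec v -> is_lim_seq (fun n => v n + d) p_infty ->
  u 1%nat - K * v 1%nat = lambar * (u 0%nat - K * v 0%nat) ->
  is_lim_seq (fun n => (u n + c) / (v n + d)) K.
Proof.
  intros Hu Hv Hvd HK.
  set (w := fun n => u n - K * v n).
  assert (Hw : forall n, w n = w 0%nat * lambar ^ n).
  { apply fib_rec_geom; [| exact lambar_sq | exact HK].
    intro n; unfold w; rewrite Hu, Hv; ring. }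
  apply is_lim_seq_ext_loc
    with (u := fun n => K + (w 0%nat * lambar ^ n + (c - K * d)) * / (v n + d)).
  - destruct (proj2 (is_lim_seq_spec _ _) Hvd 0) as [N HN].
    exists N; intros n Hn.
    specialize (HN n Hn); rewrite <- Hw; unfold w.
    field; lra.
  - replace (Finite K) with (Finite (K + (w 0%nat * 0 + (c - K * d)) * 0))
      by (f_equal; ring).
    apply is_lim_seq_plus'; [apply is_lim_seq_const|].
    apply is_lim_seq_mult'.
    + apply is_lim_seq_plus'; [| apply is_lim_seq_const].
      apply is_lim_seq_mult'; [apply is_lim_seq_const|].
      apply is_lim_seq_geom, Rabs_lambar_lt_1.
    + change (Finite 0) with (Rbar_inv p_infty).
      apply is_lim_seq_inv; [exact Hvd | discriminate].
Qed.

Lemma nones_le_1 (v : list nat) :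
  (forall x, In x v -> (x <= 1)%nat) -> nones v = list_sum v.
Proof.
  unfold nones; induction v as [|x v IH]; intro Hv; [reflexivity|].
  assert (Hx : (x <= 1)%nat) by (apply Hv; left; reflexivity).
  assert (Htl : nones v = list_sum v) by (apply IH; intros y Hy; apply Hv; right; exact Hy).
  unfold nones in Htl; simpl in Htl |- *.
  destruct x as [|[|x]]; simpl; lia.
Qed.

Lemma is01_le_1 (T : mat2) i j : is01 T -> (T i j <= 1)%nat.
Proof. intro H; destruct (H i j) as [-> | ->]; lia. Qed.

Lemma nones_alpha_vec (T1 T2 : mat2) i :
  is01 T1 -> is01 T2 -> nones (alpha_vec T1 T2 i) = list_sum (alpha_vec T1 T2 i).
Proof.
  intros H1 H2; apply nones_le_1.
  pose proof (is01_le_1 T1 i i1 H1); pose proof (is01_le_1 T1 i i2 H1).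
  pose proof (is01_le_1 T2 i i1 H2); pose proof (is01_le_1 T2 i i2 H2).
  intros x Hx; simpl in Hx.
  repeat destruct Hx as [<- | Hx]; try contradiction; nia.
Qed.

Lemma k2_row_sum (T : mat2) i : is01 T -> k2 T i = list_sum (row T i).
Proof.
  intro H; apply nones_le_1.
  intros x Hx; simpl in Hx.
  repeat destruct Hx as [<- | Hx]; try contradiction; auto using is01_le_1.
Qed.

Fixpoint gamma_uniform (al be n : nat) : nat * nat :=
  match n with
  | O => (1%nat, 1%nat)
  | S m => let (a, b) := gamma_uniform al be m in ((al * a * b)%nat, (be * a)%nat)
  end.

Lemma gamma_eq_uniform (T1 T2 : mat2) (al be : nat) :
  (forall i, list_sum (alpha_vec T1 T2 i) = al) ->
  (forall i, list_sum (row T1 i) = be) ->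
  forall n i, fst (gamma T1 T2 n) i = fst (gamma_uniform al be n) /\
              snd (gamma T1 T2 n) i = snd (gamma_uniform al be n).
Proof.
  intros Hal Hbe n; induction n as [|n IH]; [split; reflexivity|].
  intro i; specialize (Hal i); specialize (Hbe i); simpl in Hal, Hbe |- *.
  destruct (gamma T1 T2 n) as [g1 g2], (gamma_uniform al be n) as [a b]; simpl in IH |- *.
  destruct (IH i1) as [-> ->], (IH i2) as [-> ->].
  split; [rewrite <- Hal | rewrite <- Hbe]; ring.
Qed.

Lemma gamma1_sum_eq_uniform (T1 T2 : mat2) (al be n : nat) :
  (forall i, list_sum (alpha_vec T1 T2 i) = al) ->
  (forall i, list_sum (row T1 i) = be) ->
  (gamma1 T1 T2 i1 n + gamma1 T1 T2 i2 n = 2 * fst (gamma_uniform al be n))%nat.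
Proof.
  intros Hal Hbe; unfold gamma1.
  rewrite !(proj1 (gamma_eq_uniform T1 T2 al be Hal Hbe n _)); lia.
Qed.

Lemma gamma_uniform_pos (al be n : nat) :
  (0 < al)%nat -> (0 < be)%nat ->
  (0 < fst (gamma_uniform al be n))%nat /\ (0 < snd (gamma_uniform al be n))%nat.
Proof.
  intros Hal Hbe; induction n as [|n IH]; simpl; [lia|].
  destruct (gamma_uniform al be n) as [a b]; simpl in *; nia.
Qed.

Lemma ln_gamma_uniform_fib (al be : nat) :
  (0 < al)%nat -> (0 < be)%nat ->
  fib_rec (fun n => ln (INR (fst (gamma_uniform al be n))) + (ln (INR al) + ln (INR be))).
Proof.
  intros Hal Hbe n.
  pose proof (gamma_uniform_pos al be n Hal Hbe) as Hn.
  assert (Hal' : 0 < INR al) by (apply lt_0_INR; exact Hal).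
  assert (Hbe' : 0 < INR be) by (apply lt_0_INR; exact Hbe).
  simpl; destruct (gamma_uniform al be n) as [a b]; simpl in Hn |- *.
  assert (Ha : 0 < INR a) by (apply lt_0_INR; lia).
  assert (Hb : 0 < INR b) by (apply lt_0_INR; lia).
  rewrite !mult_INR, !ln_mult; auto using Rmult_lt_0_compat.
  ring.
Qed.

Lemma lseq_fib : fib_rec (fun n => INR (lseq (S (S n)))).
Proof. intro n; rewrite <- plus_INR; reflexivity. Qed.

Lemma lseq_ge (k : nat) : (S k <= lseq k)%nat.
Proof.
  enough (H : forall m, (S m <= lseq m)%nat /\ (S (S m) <= lseq (S m))%nat)
    by apply H.
  clear k; intro k; induction k as [|k IH]; [simpl; lia|].
  split; [apply IH|].
  change (lseq (S (S k))) with (lseq (S k) + lseq k)%nat; lia.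
Qed.

Lemma En_add_2 (n : nat) : (En n + 2 = lseq (S (S n)))%nat.
Proof.
  induction n as [|n IH]; [reflexivity|].
  change (lseq (S (S (S n)))) with (lseq (S (S n)) + lseq (S n))%nat.
  change (En (S n)) with (En n + lseq (S n))%nat; lia.
Qed.

(* [x + y] and [x + (x + y)] are the first two terms of
   [ln a_n + ln alpha + ln beta] (with [x = ln alpha], [y = ln beta]);
   [3] and [5] are those of [l_{n+2}]. *)
Lemma entropy_constant_init (x y : R) :
  let K := (x - lambar * y) / lam ^ 2 in
  (x + (x + y)) - K * 5 = lambar * ((x + y) - K * 3).
Proof.
  intro K.
  assert (Hl : lambar = 1 - lam) by (pose proof lam_add_lambar; lra).
  assert (Hk : K * lam ^ 2 = x - lambar * y) by (unfold K; field; pose proof lam_gt_1; nra).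
  assert (H4 : 2 + 3 * lam = lam ^ 2 * lam ^ 2) by (pose proof lam_sq; nra).
  assert (HK4 : K * (2 + 3 * lam) = (lam + 1) * (x - lambar * y))
    by (rewrite H4, <- Hk, <- lam_sq; ring).
  rewrite Hl in HK4 |- *.
  replace ((lam + 1) * (x - (1 - lam) * y))
    with (x + lam * x + lam * y + (lam ^ 2 - lam - 1) * y) in HK4 by ring.
  rewrite lam_sq in HK4.
  lra.
Qed.

Lemma uniform_entropy_lim (al be : nat) :
  (0 < al)%nat -> (0 < be)%nat ->
  is_lim_seq (fun n => ln (INR (2 * fst (gamma_uniform al be n))) / INR (En n))
    ((ln (INR al) - lambar * ln (INR be)) / lam ^ 2).
Proof.
  intros Hal Hbe.
  set (a n := fst (gamma_uniform al be n)).
  set (L := ln (INR al) + ln (INR be)).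
  apply is_lim_seq_ext
    with (u := fun n => (ln (INR (a n)) + L + (ln 2 - L)) / (INR (lseq (S (S n))) + -2)).
  { intro n.
    pose proof (proj1 (gamma_uniform_pos al be n Hal Hbe)).
    rewrite mult_INR, ln_mult, <- En_add_2, plus_INR by (apply lt_0_INR; lia).
    replace (INR 2) with 2 by (simpl; lra).
    unfold a; f_equal; ring. }
  apply fib_rec_ratio_lim.
  - apply ln_gamma_uniform_fib; assumption.
  - exact lseq_fib.
  - apply is_lim_seq_le_p_loc with (u := INR); [| exact is_lim_seq_INR].
    exists 0%nat; intros n _.
    pose proof (le_INR _ _ (lseq_ge (S (S n)))); rewrite !S_INR in *; lra.
  - replace (INR (lseq 2)) with 3 by (simpl; lra).
    replace (INR (lseq 3)) with 5 by (simpl; lra).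
    unfold a; simpl; rewrite !Nat.mul_1_r, ln_1, Rplus_0_l.
    apply entropy_constant_init.
Qed.

Theorem theorem3 (T1 T2 : mat2) (alpha beta : nat) :
  is01 T1 -> is01 T2 -> no_zero_row T1 -> no_zero_row T2 ->
  nones (alpha_vec T1 T2 i1) = alpha -> nones (alpha_vec T1 T2 i2) = alpha ->
  (2 <= alpha)%nat ->
  k2 T1 i1 = beta -> k2 T1 i2 = beta ->
  entropy T1 T2 =
    Finite (((1 - lambar * (ln (INR beta) / ln (INR alpha))) / lam ^ 2) * ln (INR alpha))
  /\ (beta = alpha -> entropy T1 T2 = Finite (ln (INR alpha) / lam)).
Proof.
  intros H1 H2 Z1 _ A1 A2 Ha B1 B2.
  assert (HA : forall i, list_sum (alpha_vec T1 T2 i) = alpha)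
    by (intros []; rewrite <- nones_alpha_vec; auto).
  assert (HB : forall i, list_sum (row T1 i) = beta)
    by (intros []; rewrite <- k2_row_sum; auto).
  assert (Hb : (0 < beta)%nat).
  { destruct (Z1 i1) as [j Hj]; specialize (HB i1); simpl in HB; destruct j; lia. }
  assert (Hent : entropy T1 T2 = Finite ((ln (INR alpha) - lambar * ln (INR beta)) / lam ^ 2)).
  { apply is_LimSup_seq_unique, is_lim_LimSup_seq.
    eapply is_lim_seq_ext; [| apply uniform_entropy_lim; lia]; intro n.
    rewrite (gamma1_sum_eq_uniform T1 T2 alpha beta n HA HB); reflexivity. }
  assert (Hlnal : 0 < ln (INR alpha))
    by (rewrite <- ln_1; apply ln_increasing; [lra | apply lt_1_INR; lia]).
  pose proof lam_gt_1.
  rewrite Hent; split.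
  - f_equal; field; split; lra.
  - intros ->; f_equal.
    replace lambar with (1 - lam) by (pose proof lam_add_lambar; lra).
    field; lra.
Qed.
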